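(* For a definable set $X\subseteq Z^m\times R^n$ the following are equivalent: (1) $X$ is $Z$-internal; (2) the projection of $X$ on the $R$-coordinates (i.e. onto $R^n$) is finite; (3) there is a definable bijection from $X$ to a definable subset of $Z^{m+1}$.
   Context: Let $\mathfrak C$ be a monster model, $Z,R$ definable subsets of $\mathfrak C$ which are stably embedded (subsets of $Z^n$, resp. $R^n$, definable with parameters from $\mathfrak C$ are definable with parameters from $Z$, resp. $R$) and fully orthogonal (for all $m,n$, every definable subset of $Z^m\times R^n$ is a finite union of sets $U\times V$ with $U\subseteq Z^m$, $V\subseteq R^n$ definable). ''Definable'' means definable in $(Z,R)^{eq}$ (the two-sorted structure $(Z,R)$ with no connection between the sorts, expanded by imaginary sorts) with parameters from the monster model. A definable set $X$ is $Z$-internal if there is a definable surjection from $Z^k$ onto $X$ for some $k$. *)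

From mathcomp Require Import all_boot.
Set Implicit Arguments. Unset Strict Implicit. Unset Printing Implicit Defensive.

Definition tcat (M : Type) (a b : nat) (x : 'I_a -> M) (y : 'I_b -> M)
  : 'I_(a + b) -> M :=
  fun i => match split i with inl j => x j | inr j => y j end.
Definition tleft (M : Type) (a b : nat) (x : 'I_(a + b) -> M) : 'I_a -> M :=
  fun i => x (lshift b i).
Definition tright (M : Type) (a b : nat) (x : 'I_(a + b) -> M) : 'I_b -> M :=
  fun j => x (rshift a j).

(* ---------- a first-order structure, given by its 0-definable sets ----------
   (van den Dries' notion of a "structure on M": for each k a boolean algebra of
   subsets of M^k, closed under cylinders, containing the diagonals, closed under
   projections.  These are exactly the families of 0-definable sets of
   first-order structures on M.) *)
Record defstr (M : Type) := DefStr {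
  def0 : forall k : nat, (('I_k -> M) -> Prop) -> Prop;
  def0_T : forall k, def0 (fun _ : 'I_k -> M => True);
  def0_C : forall k (A : ('I_k -> M) -> Prop), def0 A -> def0 (fun x => ~ A x);
  def0_U : forall k (A B : ('I_k -> M) -> Prop), def0 A -> def0 B ->
             def0 (fun x => A x \/ B x);
  def0_cylL : forall k (A : ('I_k -> M) -> Prop), def0 A ->
             def0 (fun x : 'I_(1 + k) -> M => A (tright x));
  def0_cylR : forall k (A : ('I_k -> M) -> Prop), def0 A ->
             def0 (fun x : 'I_(k + 1) -> M => A (tleft x));
  def0_diag : forall k, def0 (fun x : 'I_k.+1 -> M => x ord0 = x ord_max);
  def0_proj : forall k (A : ('I_(k + 1) -> M) -> Prop), def0 A ->
             def0 (fun x : 'I_k -> M => exists y : 'I_1 -> M, A (tcat x y))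
}.

Definition definable_over (M : Type) (S : defstr M) (P : M -> Prop) (k : nat)
  (X : ('I_k -> M) -> Prop) : Prop :=
  exists (p : nat) (b : 'I_p -> M), (forall i, P (b i)) /\
    exists D : ('I_(k + p) -> M) -> Prop, def0 S D /\
      forall x, X x <-> D (tcat x b).

(* definable with parameters from the (monster) model *)
Definition definable (M : Type) (S : defstr M) (k : nat)
  (X : ('I_k -> M) -> Prop) : Prop := definable_over S (fun _ => True) X.

Definition in_ZR (M : Type) (Z R : M -> Prop) (m n : nat) (x : 'I_(m + n) -> M) :=
  (forall i, Z (tleft x i)) /\ (forall j, R (tright x j)).

Definition in_pow (M : Type) (Z : M -> Prop) (k : nat) (x : 'I_k -> M) :=
  forall i, Z (x i).

Definition stably_embedded (M : Type) (S : defstr M) (Z : M -> Prop) : Prop :=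
  forall k (X : ('I_k -> M) -> Prop),
    (forall x, X x -> in_pow Z x) -> definable S X -> definable_over S Z X.

Definition fully_orthogonal (M : Type) (S : defstr M) (Z R : M -> Prop) : Prop :=
  forall m n (X : ('I_(m + n) -> M) -> Prop),
    definable S X -> (forall x, X x -> in_ZR Z R x) ->
    exists (p : nat) (U : 'I_p -> ('I_m -> M) -> Prop)
                     (V : 'I_p -> ('I_n -> M) -> Prop),
      (forall i, definable S (U i) /\ forall u, U i u -> in_pow Z u) /\
      (forall i, definable S (V i) /\ forall v, V i v -> in_pow R v) /\
      (forall x, X x <-> exists i, U i (tleft x) /\ V i (tright x)).

Definition fun_graph (M : Type) (a b : nat) (A : ('I_a -> M) -> Prop)
  (B : ('I_b -> M) -> Prop) (G : ('I_(a + b) -> M) -> Prop) : Prop :=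
  (forall x y, G (tcat x y) -> A x /\ B y) /\
  (forall x, A x -> exists y, G (tcat x y)) /\
  (forall x y y', G (tcat x y) -> G (tcat x y') -> y = y').

Definition graph_surjective (M : Type) (a b : nat) (B : ('I_b -> M) -> Prop)
  (G : ('I_(a + b) -> M) -> Prop) : Prop :=
  forall y, B y -> exists x, G (tcat x y).

Definition graph_injective (M : Type) (a b : nat)
  (G : ('I_(a + b) -> M) -> Prop) : Prop :=
  forall x x' y, G (tcat x y) -> G (tcat x' y) -> x = x'.

Definition Z_internal (M : Type) (S : defstr M) (Z : M -> Prop) (d : nat)
  (X : ('I_d -> M) -> Prop) : Prop :=
  exists (k : nat) (G : ('I_(k + d) -> M) -> Prop),
    definable S G /\ fun_graph (fun z : 'I_k -> M => in_pow Z z) X G /\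
    graph_surjective X G.

Definition finite_proj_R (M : Type) (m n : nat) (X : ('I_(m + n) -> M) -> Prop)
  : Prop :=
  exists (p : nat) (r : 'I_p -> ('I_n -> M)),
    forall x, X x -> exists i, tright x = r i.

Definition infinite_set (M : Type) (Z : M -> Prop) : Prop :=
  forall (p : nat) (f : 'I_p -> M), exists z, Z z /\ forall i, z <> f i.

(* If X is Z-internal, or injects definably into Z^(m+1), one obtains a
   definable W contained in Z^a x R^n whose R-coordinates are a function of its
   Z-coordinates and which meets every R-part of X.  By full orthogonality W is
   a finite union of boxes U x V, and functionality forces each V to be a single
   point, so X has only finitely many R-parts.  Conversely, if these are
   r_1, ..., r_p, choose distinct c_1, ..., c_p in the infinite set Z: then
   (u, r_i) |-> (u, c_i) (with i least) is a definable injection into Z^(m+1),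
   and extending its inverse by a fixed point of X gives a definable surjection
   from Z^(m+1) onto X. *)

From mathcomp Require Import all_boot zify.
From Stdlib Require Import FunctionalExtensionality PropExtensionality Classical ClassicalEpsilon.
Set Implicit Arguments. Unset Strict Implicit. Unset Printing Implicit Defensive.

Lemma transport_iff (T : Type) (P : (T -> Prop) -> Prop) (A B : T -> Prop) :
  P A -> (forall x, A x <-> B x) -> P B.
Proof.
move=> hA AB; suff <- : A = B by [].
by apply: functional_extensionality => x; apply: propositional_extensionality.
Qed.

Section Tuples.
Variable M : Type.

Lemma coord_congr N (x : 'I_N -> M) (i j : 'I_N) : val i = val j -> x i = x j.
Proof. by move=> h; congr x; apply: val_inj. Qed.

Lemma tcat_lshift a b (x : 'I_a -> M) (y : 'I_b -> M) i : tcat x y (lshift b i) = x i.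
Proof. by rewrite /tcat (unsplitK (inl i : 'I_a + 'I_b)). Qed.

Lemma tcat_rshift a b (x : 'I_a -> M) (y : 'I_b -> M) i : tcat x y (rshift a i) = y i.
Proof. by rewrite /tcat (unsplitK (inr i : 'I_a + 'I_b)). Qed.

Lemma tleft_tcat a b (x : 'I_a -> M) (y : 'I_b -> M) : tleft (tcat x y) = x.
Proof. by apply: functional_extensionality => i; rewrite /tleft tcat_lshift. Qed.

Lemma tright_tcat a b (x : 'I_a -> M) (y : 'I_b -> M) : tright (tcat x y) = y.
Proof. by apply: functional_extensionality => i; rewrite /tright tcat_rshift. Qed.

Lemma tcat_tleft_tright a b (w : 'I_(a + b) -> M) : tcat (tleft w) (tright w) = w.
Proof.
apply: functional_extensionality => i; rewrite /tcat /tleft /tright.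
by case: splitP => j /= h; apply: coord_congr.
Qed.

Lemma tuple_split_eq a b (x y : 'I_(a + b) -> M) :
  tleft x = tleft y -> tright x = tright y -> x = y.
Proof. by move=> hl hr; rewrite -(tcat_tleft_tright x) -(tcat_tleft_tright y) hl hr. Qed.

Lemma tcat_lshift_comp a b k (x : 'I_a -> M) (y : 'I_b -> M) (f : 'I_k -> 'I_a) :
  (fun i => tcat x y (lshift b (f i))) = (fun i => x (f i)).
Proof. by apply: functional_extensionality => i; rewrite tcat_lshift. Qed.

Lemma tcat_rshift_comp a b k (x : 'I_a -> M) (y : 'I_b -> M) (f : 'I_k -> 'I_b) :
  (fun i => tcat x y (rshift a (f i))) = (fun i => y (f i)).
Proof. by apply: functional_extensionality => i; rewrite tcat_rshift. Qed.

Definition tnil : 'I_0 -> M.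
Proof. by case. Defined.

Definition ocat a b N (g : 'I_a -> 'I_N) (h : 'I_b -> 'I_N) : 'I_(a + b) -> 'I_N :=
  fun i => match split i with inl j => g j | inr j => h j end.

Lemma comp_ocat a b N (g : 'I_a -> 'I_N) (h : 'I_b -> 'I_N) (w : 'I_N -> M) :
  (fun i => w (ocat g h i)) = tcat (fun i => w (g i)) (fun i => w (h i)).
Proof. by apply: functional_extensionality => i; rewrite /tcat /ocat; case: (split i). Qed.

(* Coordinates indexed by [nat], to compare tuples whose lengths are only
   propositionally equal, such as [a + (b + c)] and [a + b + c]. *)
Definition tcoord N (x : 'I_N -> M) (n : nat) : option M :=
  if insub n is Some i then Some (x i) else None.

Lemma tcoord_ord N (x : 'I_N -> M) (i : 'I_N) : tcoord x i = Some (x i).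
Proof. by rewrite /tcoord valK. Qed.

Lemma tcoord_out N (x : 'I_N -> M) n : N <= n -> tcoord x n = None.
Proof. by move=> h; rewrite /tcoord insubN // -leqNgt. Qed.

Lemma tcoord_inj N (x y : 'I_N -> M) : (forall n, tcoord x n = tcoord y n) -> x = y.
Proof.
move=> H; apply: functional_extensionality => i.
by move: (H i); rewrite !tcoord_ord => -[].
Qed.

Lemma tcoord_reindex N k (x : 'I_N -> M) (f : 'I_k -> 'I_N) (g : nat -> nat) :
  (forall i, val (f i) = g i) ->
  forall n, tcoord (fun i => x (f i)) n = if n < k then tcoord x (g n) else None.
Proof.
move=> hf n; case: ifP => h; last by rewrite tcoord_out //; lia.
by rewrite -[n]/(val (Ordinal h)) tcoord_ord -hf tcoord_ord.
Qed.

Lemma tcoord_cast k k' (e : k = k') (x : 'I_k' -> M) n :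
  tcoord (fun i => x (cast_ord e i)) n = tcoord x n.
Proof.
rewrite (tcoord_reindex _ (g := id)) //; case: ifP => // h.
by rewrite tcoord_out //; lia.
Qed.

Lemma tcoord_tleft a b (x : 'I_(a + b) -> M) n :
  tcoord (tleft x) n = if n < a then tcoord x n else None.
Proof. exact: (tcoord_reindex _ (g := id)). Qed.

Lemma tcoord_tright a b (x : 'I_(a + b) -> M) n : tcoord (tright x) n = tcoord x (a + n).
Proof.
rewrite (tcoord_reindex _ (g := addn a)) //; case: ifP => // h.
by rewrite tcoord_out //; lia.
Qed.

Lemma tcoord_tcat a b (x : 'I_a -> M) (y : 'I_b -> M) n :
  tcoord (tcat x y) n = if n < a then tcoord x n else tcoord y (n - a).
Proof.
case: (ltnP n (a + b)) => hn; last first.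
  by rewrite tcoord_out //; case: ifP => h; rewrite tcoord_out //; lia.
rewrite -[n]/(val (Ordinal hn)) tcoord_ord /tcat.
case: splitP => j /= e.
  by rewrite e tcoord_ord.
by rewrite e addKn tcoord_ord.
Qed.

Definition tinit m (y : 'I_m.+1 -> M) : 'I_m -> M := fun t => y (lift ord_max t).

Definition trcons m (u : 'I_m -> M) (c : M) : 'I_m.+1 -> M :=
  fun t => if unlift ord_max t is Some t' then u t' else c.

Lemma tinit_trcons m (u : 'I_m -> M) c : tinit (trcons u c) = u.
Proof. by apply: functional_extensionality => t; rewrite /tinit /trcons liftK. Qed.

Lemma trcons_last m (u : 'I_m -> M) c : trcons u c ord_max = c.
Proof. by rewrite /trcons unlift_none. Qed.

Lemma trcons_tinit m (y : 'I_m.+1 -> M) : trcons (tinit y) (y ord_max) = y.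
Proof.
apply: functional_extensionality => t; rewrite /trcons /tinit.
by case: (unliftP ord_max t) => [t' ->|->].
Qed.

Lemma trcons_inj m (u : 'I_m -> M) c :
  injective u -> (forall i, c <> u i) -> injective (trcons u c).
Proof.
move=> inj_u cu i j; rewrite /trcons.
case: (unliftP ord_max i) => [i' ->|->]; case: (unliftP ord_max j) => [j' ->|->] //.
- by move/inj_u ->.
- by move=> e; case: (cu i').
- by move=> e; case: (cu j').
Qed.

Variable Z : M -> Prop.

Lemma in_pow_tcat a b (x : 'I_a -> M) (y : 'I_b -> M) :
  in_pow Z x -> in_pow Z y -> in_pow Z (tcat x y).
Proof. by move=> hx hy i; rewrite /tcat; case: (split i). Qed.

Lemma in_pow_trcons m (u : 'I_m -> M) c : in_pow Z u -> Z c -> in_pow Z (trcons u c).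
Proof. by move=> hu hc t; rewrite /trcons; case: (unlift ord_max t). Qed.

End Tuples.

Section ZeroDefinable.
Variables (M : Type) (S : defstr M).

Lemma def0_and k (A B : ('I_k -> M) -> Prop) :
  def0 S A -> def0 S B -> def0 S (fun x => A x /\ B x).
Proof.
move=> hA hB; apply: (transport_iff (def0_C (def0_U (def0_C hA) (def0_C hB)))) => x.
split; last by case=> ? ? [].
by move=> H; split; apply: NNPP => h; apply: H; [left|right].
Qed.

Lemma def0_cast k k' (e : k = k') (A : ('I_k -> M) -> Prop) :
  def0 S A -> def0 S (fun x : 'I_k' -> M => A (fun i => x (cast_ord e i))).
Proof.
case: k' / e => hA; apply: (transport_iff hA) => x.
rewrite (_ : (fun i => x (cast_ord erefl i)) = x) //.
by apply: tcoord_inj => n; rewrite tcoord_cast.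
Qed.

Lemma def0_cylLn a k (A : ('I_k -> M) -> Prop) :
  def0 S A -> def0 S (fun x : 'I_(a + k) -> M => A (tright x)).
Proof.
move=> hA; elim: a => [|a IH].
  apply: (transport_iff (def0_cast (erefl : k = 0 + k) hA)) => x.
  rewrite (_ : (fun i => _) = tright x) //.
  by apply: tcoord_inj => n; rewrite tcoord_cast tcoord_tright.
have e : 1 + (a + k) = a.+1 + k by lia.
apply: (transport_iff (def0_cast e (def0_cylL IH))) => x.
rewrite (_ : tright (tright _) = tright x) //; apply: tcoord_inj => n.
by rewrite !tcoord_tright tcoord_cast addnA.
Qed.

Lemma def0_cylRn b k (A : ('I_k -> M) -> Prop) :
  def0 S A -> def0 S (fun x : 'I_(k + b) -> M => A (tleft x)).
Proof.
move=> hA; elim: b => [|b IH].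
  have e : k = k + 0 by lia.
  apply: (transport_iff (def0_cast e hA)) => x.
  rewrite (_ : (fun i => _) = tleft x) //; apply: tcoord_inj => n; rewrite tcoord_cast tcoord_tleft.
  by case: ifP => // h; rewrite tcoord_out //; lia.
have e : k + b + 1 = k + b.+1 by lia.
apply: (transport_iff (def0_cast e (def0_cylR IH))) => x.
rewrite (_ : tleft (tleft _) = tleft x) //; apply: tcoord_inj => n.
by rewrite !tcoord_tleft tcoord_cast; case: ifP => h //; case: ifP => h' //; lia.
Qed.

(* The diagonal axiom only relates the first and last coordinates; cylinders
   move any pair [i < j] into that position. *)
Lemma def0_eq N (i j : 'I_N) : def0 S (fun x : 'I_N -> M => x i = x j).
Proof.
wlog lt_ij : i j / (i : nat) < j.
  move=> H; case: (ltngtP i j) => h; first exact: H.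
    by apply: (transport_iff (H j i h)) => x; split=> ->.
  have -> : i = j by apply: val_inj.
  by apply: (transport_iff (def0_T S N)).
pose d := j - i.+1.
have e : i + d.+1.+1 + (N - j.+1) = N by move: (ltn_ord j); rewrite /d; lia.
apply: (transport_iff (def0_cast e (def0_cylRn (N - j.+1) (def0_cylLn i (def0_diag S d.+1))))) => x.
rewrite /tleft /tright.
rewrite (coord_congr x (_ : val (cast_ord e (lshift _ (rshift i ord0))) = val i)) /=; last by lia.
by rewrite (coord_congr x (_ : val (cast_ord e (lshift _ (rshift i ord_max))) = val j)) //= /d; lia.
Qed.

Lemma def0_projn j k (C : ('I_(j + k) -> M) -> Prop) :
  def0 S C -> def0 S (fun x : 'I_j -> M => exists y : 'I_k -> M, C (tcat x y)).
Proof.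
elim: k C => [|k IH] C hC.
  have e : j + 0 = j by lia.
  have tcat_nil x (y : 'I_0 -> M) : tcat x y = fun i => x (cast_ord e i).
    apply: tcoord_inj => n; rewrite tcoord_tcat tcoord_cast; case: ifP => // h.
    by rewrite !tcoord_out //; lia.
  apply: (transport_iff (def0_cast e hC)) => x; split; last by case=> y; rewrite tcat_nil.
  by exists (tnil M); rewrite tcat_nil.
have e : j + k.+1 = j + k + 1 by lia.
apply: (transport_iff (IH _ (def0_proj (def0_cast e hC)))) => x; split.
  case=> y [y1 H]; exists (fun t => tcat y y1 (cast_ord (esym (addn1 k)) t)).
  move: H; congr C; apply: tcoord_inj => n.
  rewrite !tcoord_cast !tcoord_tcat tcoord_cast tcoord_tcat.
  by repeat case: ifP => ? //; try (congr tcoord; lia); lia.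
case=> Y H; exists (tinit Y), (fun _ => Y ord_max); move: H; congr C.
apply: tcoord_inj => n; rewrite !tcoord_cast !tcoord_tcat.
rewrite (tcoord_reindex _ (g := id) (@lift_max k)).
rewrite (tcoord_reindex Y (f := fun _ : 'I_1 => ord_max) (g := fun=> k)) //.
by repeat case: ifP => ? //; try (congr tcoord; lia); try lia; rewrite tcoord_out //; lia.
Qed.

Lemma def0_all q k (P : 'I_q -> ('I_k -> M) -> Prop) :
  (forall i, def0 S (P i)) -> def0 S (fun x => forall i, P i x).
Proof.
elim: q P => [|q IH] P hP; first by apply: (transport_iff (def0_T S k)) => x; split=> // _ [].
apply: (transport_iff (def0_and (hP ord0) (IH _ (fun i => hP (lift ord0 i))))) => x.
split; last by move=> h; split=> *; apply: h.
by case=> h0 h i; case: (unliftP ord0 i) => [j ->|->].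
Qed.

(* Project away [y] from the cylinder over [A y] cut by the diagonals [y i = x (f i)]. *)
Lemma def0_pull k j (f : 'I_k -> 'I_j) (A : ('I_k -> M) -> Prop) :
  def0 S A -> def0 S (fun x : 'I_j -> M => A (fun i => x (f i))).
Proof.
move=> hA.
have hC := def0_and (def0_cylLn j hA) (def0_all (fun i => def0_eq (rshift j i) (lshift k (f i)))).
apply: (transport_iff (def0_projn hC)) => x; split.
  case=> y [hy e]; rewrite tright_tcat in hy.
  suff <- : y = (fun i => x (f i)) by [].
  by apply: functional_extensionality => i; move: (e i); rewrite tcat_rshift tcat_lshift.
move=> h; exists (fun i => x (f i)); rewrite tright_tcat; split=> // i.
by rewrite tcat_rshift tcat_lshift.
Qed.
End ZeroDefinable.

Section Definable.
Variables (M : Type) (S : defstr M).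

Lemma definable_of_def0 k (A : ('I_k -> M) -> Prop) : def0 S A -> definable S A.
Proof.
move=> hA; exists 0, (tnil M); split=> //.
exists (fun w : 'I_(k + 0) -> M => A (tleft w)); split; first exact: def0_cylRn.
by move=> x; rewrite tleft_tcat.
Qed.

Lemma definable_pull k j (f : 'I_k -> 'I_j) (A : ('I_k -> M) -> Prop) :
  definable S A -> definable S (fun x : 'I_j -> M => A (fun i => x (f i))).
Proof.
case=> p [b [_ [D [hD HA]]]]; exists p, b; split=> //.
exists (fun w : 'I_(j + p) -> M => D (fun i => w (ocat (fun a => lshift p (f a)) (@rshift j p) i))).
split; first exact: def0_pull.
by move=> x; rewrite comp_ocat tcat_lshift_comp tcat_rshift_comp HA.
Qed.

Lemma definable_and k (A B : ('I_k -> M) -> Prop) :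
  definable S A -> definable S B -> definable S (fun x => A x /\ B x).
Proof.
case=> p1 [b1 [_ [D1 [hD1 HA]]]]; case=> p2 [b2 [_ [D2 [hD2 HB]]]].
exists (p1 + p2), (tcat b1 b2); split=> //.
pose f1 := ocat (@lshift k (p1 + p2)) (fun c => rshift k (lshift p2 c)).
pose f2 := ocat (@lshift k (p1 + p2)) (fun c => rshift k (rshift p1 c)).
exists (fun w => D1 (fun i => w (f1 i)) /\ D2 (fun i => w (f2 i))).
split; first exact: def0_and (def0_pull _ hD1) (def0_pull _ hD2).
by move=> x; rewrite HA HB /f1 /f2 !comp_ocat !tcat_lshift_comp !tcat_rshift_comp tcat_lshift_comp.
Qed.

Lemma definable_not k (A : ('I_k -> M) -> Prop) :
  definable S A -> definable S (fun x => ~ A x).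
Proof.
case=> p [b [_ [D [hD HA]]]]; exists p, b; split=> //.
by exists (fun w => ~ D w); split; [exact: def0_C | move=> x; rewrite HA].
Qed.

Lemma definable_or k (A B : ('I_k -> M) -> Prop) :
  definable S A -> definable S B -> definable S (fun x => A x \/ B x).
Proof.
move=> hA hB.
apply: (transport_iff (definable_not (definable_and (definable_not hA) (definable_not hB)))).
move=> x; split; last by move=> h [h1 h2]; case: h.
by move=> h; apply: NNPP => h'; apply: h; split=> h1; apply: h'; [left|right].
Qed.

Lemma definable_imp k (A B : ('I_k -> M) -> Prop) :
  definable S A -> definable S B -> definable S (fun x => A x -> B x).
Proof.
move=> hA hB; apply: (transport_iff (definable_or (definable_not hA) hB)) => x.
split; first by case=> h // /h.
by move=> h; case: (classic (A x)) => hx; [right; apply: h | left].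
Qed.

Lemma definable_cst k (P : Prop) : definable S (fun _ : 'I_k -> M => P).
Proof.
have hT := definable_of_def0 (def0_T S k).
case: (classic P) => hP; first exact: transport_iff hT _.
by apply: (transport_iff (definable_not hT)) => x; split=> // /(_ I).
Qed.

Lemma definable_all q k (P : 'I_q -> ('I_k -> M) -> Prop) :
  (forall i, definable S (P i)) -> definable S (fun x => forall i, P i x).
Proof.
elim: q P => [|q IH] P hP.
  by apply: (transport_iff (definable_cst k True)) => x; split=> // _ [].
apply: (transport_iff (definable_and (hP ord0) (IH _ (fun i => hP (lift ord0 i))))) => x.
split; last by move=> h; split=> *; apply: h.
by case=> h0 h i; case: (unliftP ord0 i) => [j ->|->].
Qed.

Lemma definable_ex q k (P : 'I_q -> ('I_k -> M) -> Prop) :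
  (forall i, definable S (P i)) -> definable S (fun x => exists i, P i x).
Proof.
move=> hP; apply: (transport_iff (definable_not (definable_all (fun i => definable_not (hP i))))).
move=> x; split; last by case=> i h H; exact: H i h.
by move=> h; apply: NNPP => h'; apply: h => i hi; apply: h'; exists i.
Qed.

Lemma definable_exl j k (C : ('I_(k + j) -> M) -> Prop) :
  definable S C -> definable S (fun y : 'I_j -> M => exists x : 'I_k -> M, C (tcat x y)).
Proof.
case=> p [b [_ [D [hD HC]]]]; exists p, b; split=> //.
pose f := ocat (ocat (@rshift (j + p) k) (fun c => lshift k (lshift p c)))
               (fun c => lshift k (rshift j c)).
exists (fun v => exists x : 'I_k -> M, D (fun i => tcat v x (f i))).
split; first exact: def0_projn (def0_pull _ hD).
move=> y; rewrite /f; split=> -[x hx]; exists x; move: hx;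
  by rewrite !comp_ocat !tcat_lshift_comp !tcat_rshift_comp ?tcat_lshift_comp HC.
Qed.

Lemma definable_eq_tuple q N (f g : 'I_q -> 'I_N) :
  definable S (fun x : 'I_N -> M => (fun i => x (f i)) = (fun i => x (g i))).
Proof.
apply: (transport_iff (definable_of_def0 (def0_all (fun i => def0_eq S (f i) (g i))))) => x.
split; first exact: functional_extensionality.
by move=> e i; exact: (congr1 (@^~ i) e).
Qed.

Lemma definable_eq_const_tuple q N (f : 'I_q -> 'I_N) (c : 'I_q -> M) :
  definable S (fun x : 'I_N -> M => (fun i => x (f i)) = c).
Proof.
exists q, c; split=> //.
exists (fun w : 'I_(N + q) -> M => forall i, w (lshift q (f i)) = w (rshift N i)).
split; first exact: def0_all (fun i => def0_eq S _ _).
move=> x; split=> [<- i|e]; first by rewrite tcat_lshift tcat_rshift.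
by apply: functional_extensionality => i; move: (e i); rewrite tcat_lshift tcat_rshift.
Qed.

Lemma definable_eq_const N (i : 'I_N) (c : M) : definable S (fun x : 'I_N -> M => x i = c).
Proof.
apply: (transport_iff (definable_eq_const_tuple (fun _ : 'I_1 => i) (fun=> c))) => x.
by split=> [e | ->]; [exact: (congr1 (@^~ ord0) e) |].
Qed.

Lemma definable_swap a b (G : ('I_(a + b) -> M) -> Prop) :
  definable S G -> definable S (fun w : 'I_(b + a) -> M => G (tcat (tright w) (tleft w))).
Proof.
move=> hG; apply: (transport_iff (definable_pull (ocat (@rshift b a) (@lshift b a)) hG)) => w.
by rewrite comp_ocat.
Qed.

End Definable.

Definition first_index (T : Type) p (r : 'I_p -> T) (v : T) (i : 'I_p) : Prop :=
  v = r i /\ forall i' : 'I_p, i' < i -> v <> r i'.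

Lemma first_index_exists (T : Type) p (r : 'I_p -> T) (v : T) :
  (exists i, v = r i) -> exists i, first_index r v i.
Proof.
case=> i0 h0; apply: NNPP => none.
suff no_index_below n (i : 'I_p) : i < n -> v <> r i by exact: no_index_below _ i0 (ltnSn i0) h0.
elim: n i => [//|n IH] i lt_in hi; apply: none; exists i; split=> // j lt_ji.
by apply: IH; lia.
Qed.

Lemma first_index_unique (T : Type) p (r : 'I_p -> T) (v : T) (i j : 'I_p) :
  first_index r v i -> first_index r v j -> i = j.
Proof.
case=> ei min_i [ej min_j]; apply: val_inj; case: (ltngtP i j) => // lt.
- by case: (min_j i lt).
- by case: (min_i j lt).
Qed.

Lemma infinite_injection (M : Type) (Z : M -> Prop) p :
  infinite_set Z -> exists c : 'I_p -> M, (forall i, Z (c i)) /\ injective c.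
Proof.
move=> Zinf; elim: p => [|p [c [Zc inj_c]]]; first by exists (tnil M); split=> -[].
have [z [Zz z_new]] := Zinf p c.
by exists (trcons c z); split; [exact: in_pow_trcons | exact: trcons_inj].
Qed.

Section Internality.
Variables (M : Type) (S : defstr M) (Z R : M -> Prop).

Definition Z_embedding m n (X : ('I_(m + n) -> M) -> Prop) : Prop :=
  exists (Y : ('I_(m.+1) -> M) -> Prop) (G : ('I_((m + n) + m.+1) -> M) -> Prop),
    definable S Y /\ (forall y, Y y -> in_pow Z y) /\
    definable S G /\ fun_graph X Y G /\ graph_injective G /\ graph_surjective Y G.

Hypothesis orthZR : fully_orthogonal S Z R.

(* A nonempty box [U_i x V_i] of [W] lies over [u] in [U_i] inside one fibre of
   [W], so [V_i] is a single point. *)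
Lemma functional_R_part_finite a n (W : ('I_(a + n) -> M) -> Prop) :
  definable S W -> (forall w, W w -> in_ZR Z R w) ->
  (forall u v v', W (tcat u v) -> W (tcat u v') -> v = v') ->
  exists p (r : 'I_p -> 'I_n -> M), forall u v, W (tcat u v) -> exists i, v = r i.
Proof.
move=> hW W_ZR W_fun.
case: (classic (exists w, W w)) => [[w0 _]|W_empty]; last first.
  by exists 0, (tnil _) => u v Wuv; case: W_empty; exists (tcat u v).
have [p [U [V [_ [_ W_boxes]]]]] := orthZR hW W_ZR.
have box_value i : exists v1, forall u v, U i u -> V i v -> v = v1.
  case: (classic (exists u v, U i u /\ V i v)) => [[u [v [Uu Vv]]]|no_point].
    exists v => u' v' Uu' Vv'; apply: (W_fun u); apply/W_boxes; exists i;
      by rewrite tleft_tcat tright_tcat.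
  by exists (tright w0) => u v Uu Vv; case: no_point; exists u, v.
have [r hr] := ClassicalEpsilon.choice _ box_value.
exists p, r => u v /W_boxes; rewrite tleft_tcat tright_tcat => -[i [Uu Vv]].
by exists i; exact: hr Uu Vv.
Qed.

Lemma finite_proj_of_Z_graph k m n (G : ('I_(k + (m + n)) -> M) -> Prop)
    (X : ('I_(m + n) -> M) -> Prop) :
  definable S G ->
  (forall z x, G (tcat z x) -> in_pow Z z /\ in_ZR Z R x) ->
  (forall z x x', G (tcat z x) -> G (tcat z x') -> x = x') ->
  (forall x, X x -> exists z, G (tcat z x)) -> finite_proj_R X.
Proof.
move=> hG G_ZR G_fun X_covered.
pose W (w : 'I_((k + m) + n) -> M) :=
  G (tcat (tleft (tleft w)) (tcat (tright (tleft w)) (tright w))).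
have [|w Ww|u v v' Wuv Wuv'|p [r hr]] := @functional_R_part_finite _ n W.
- apply: (transport_iff (definable_pull (ocat (fun i => lshift n (lshift m i))
    (ocat (fun i => lshift n (rshift k i)) (@rshift (k + m) n))) hG)) => w.
  by rewrite !comp_ocat.
- have [Zz [Zx Rx]] := G_ZR _ _ Ww; rewrite tleft_tcat tright_tcat in Zx Rx.
  by split=> //; rewrite -(tcat_tleft_tright (tleft w)); exact: in_pow_tcat.
- rewrite /W !tleft_tcat !tright_tcat in Wuv Wuv'.
  by move: (G_fun _ _ _ Wuv Wuv') => /(congr1 (@tright M m n)); rewrite !tright_tcat.
- exists p, r => x /X_covered [z Gzx]; apply: (hr (tcat z (tleft x))).
  by rewrite /W !tleft_tcat !tright_tcat tcat_tleft_tright.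
Qed.

Lemma finite_proj_of_Z_internal m n (X : ('I_(m + n) -> M) -> Prop) :
  (forall x, X x -> in_ZR Z R x) -> Z_internal S Z X -> finite_proj_R X.
Proof.
move=> X_ZR [k [G [hG [[G_dom [_ G_fun]] G_onto]]]].
by apply: (finite_proj_of_Z_graph hG _ G_fun G_onto) => z x /G_dom [Zz /X_ZR].
Qed.

Lemma finite_proj_of_Z_embedding m n (X : ('I_(m + n) -> M) -> Prop) :
  (forall x, X x -> in_ZR Z R x) -> Z_embedding X -> finite_proj_R X.
Proof.
move=> X_ZR [Y [G [_ [Y_Z [hG [[G_dom [G_tot _]] [G_inj _]]]]]]].
apply: (finite_proj_of_Z_graph (definable_swap hG)) => [y x|y x x'|x /G_tot [y Gxy]];
  rewrite ?tleft_tcat ?tright_tcat.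
- by case/G_dom => /X_ZR ? /Y_Z.
- exact: G_inj.
- by exists y; rewrite tleft_tcat tright_tcat.
Qed.

Hypothesis Z_definable : definable S (fun x : 'I_1 -> M => Z (x ord0)).

Lemma definable_in_pow k : definable S (fun z : 'I_k -> M => in_pow Z z).
Proof. exact: definable_all (fun i => definable_pull (fun=> i) Z_definable). Qed.

(* Points of [Z^(m+1)] outside the image are sent to a fixed point [x0] of [X]. *)
Lemma Z_internal_of_Z_embedding m n (X : ('I_(m + n) -> M) -> Prop) x0 :
  X x0 -> Z_embedding X -> Z_internal S Z X.
Proof.
move=> Xx0 [Y [G [hY [Y_Z [hG [[G_dom [G_tot _]] [G_inj G_onto]]]]]]].
pose H (w : 'I_(m.+1 + (m + n)) -> M) := in_pow Z (tleft w) /\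
  (Y (tleft w) /\ G (tcat (tright w) (tleft w)) \/ ~ Y (tleft w) /\ tright w = x0).
have Yl := definable_pull (@lshift m.+1 (m + n)) hY.
exists m.+1, H; split; [|split; [split; [|split]|]].
- exact: (transport_iff (definable_and (definable_pull (@lshift m.+1 (m + n)) (definable_in_pow _))
    (definable_or (definable_and Yl (definable_swap hG))
       (definable_and (definable_not Yl) (definable_eq_const_tuple S (@rshift m.+1 (m + n)) x0))))
    (fun w => iff_refl (H w))).
- move=> z x; rewrite /H tleft_tcat tright_tcat => -[Zz [[_ /G_dom []]|[_ ->]]] //.
- move=> z Zz; case: (classic (Y z)) => [Yz|nYz]; last first.
    by exists x0; rewrite /H tleft_tcat tright_tcat; split=> //; right.
  by have [x Gxz] := G_onto z Yz; exists x; rewrite /H tleft_tcat tright_tcat; split=> //; left.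
- move=> z x x'; rewrite /H !tleft_tcat !tright_tcat.
  by case=> _ [[Yz Gxz]|[nYz ->]] [_ [[Yz' Gx'z]|[nYz' ->]]] //; exact: G_inj Gxz Gx'z.
- move=> x /G_tot [y Gxy]; have [_ Yy] := G_dom _ _ Gxy.
  by exists y; rewrite /H tleft_tcat tright_tcat; split; [exact: Y_Z | left].
Qed.

Definition coding_graph m n p (X : ('I_(m + n) -> M) -> Prop) (r : 'I_p -> 'I_n -> M)
    (c : 'I_p -> M) (w : 'I_((m + n) + m.+1) -> M) : Prop :=
  X (tleft w) /\ tinit (tright w) = tleft (tleft w) /\
  exists i, first_index r (tright (tleft w)) i /\ tright w ord_max = c i.

Lemma definable_coding_graph m n p (X : ('I_(m + n) -> M) -> Prop) r (c : 'I_p -> M) :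
  definable S X -> definable S (coding_graph X r c).
Proof.
move=> hX.
have first_def i : definable S (fun w : 'I_((m + n) + m.+1) -> M =>
    first_index r (tright (tleft w)) i).
  exact: definable_and (definable_eq_const_tuple S (fun t => lshift m.+1 (rshift m t)) _)
    (definable_all (fun i' => definable_imp (definable_cst _ _ _)
       (definable_not (definable_eq_const_tuple S (fun t => lshift m.+1 (rshift m t)) _)))).
exact: transport_iff (definable_and (definable_pull (@lshift (m + n) m.+1) hX)
  (definable_and (definable_eq_tuple S (fun t => rshift (m + n) (lift ord_max t))
                                       (fun t => lshift m.+1 (lshift n t)))
    (definable_ex (fun i => definable_and (first_def i)
       (definable_eq_const S (rshift (m + n) ord_max) (c i))))))
  (fun w => iff_refl (coding_graph X r c w)).
Qed.

Hypothesis Z_infinite : infinite_set Z.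

(* The finitely many R-parts [r i] are coded by distinct points [c i] of [Z]. *)
Lemma Z_embedding_of_finite_proj m n (X : ('I_(m + n) -> M) -> Prop) :
  definable S X -> (forall x, X x -> in_ZR Z R x) -> finite_proj_R X -> Z_embedding X.
Proof.
move=> hX X_ZR [p [r X_r]]; have [c [Zc inj_c]] := infinite_injection p Z_infinite.
set G := coding_graph X r c; have hG : definable S G := definable_coding_graph r c hX.
exists (fun y => exists x, G (tcat x y)), G.
split; [|split; [|split; [|split; [split; [|split]|split]]]].
- exact: definable_exl hG.
- move=> y [x]; rewrite /G /coding_graph tleft_tcat tright_tcat => -[Xx [init_y [i [_ last_y]]]].
  by rewrite -(trcons_tinit y) init_y last_y; exact: in_pow_trcons (X_ZR x Xx).1 (Zc i).
- exact: hG.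
- move=> x y Gxy; split; last by exists x.
  by move: Gxy; rewrite /G /coding_graph tleft_tcat => -[].
- move=> x Xx; have [i first_i] := first_index_exists (X_r x Xx); exists (trcons (tleft x) (c i)).
  rewrite /G /coding_graph tleft_tcat tright_tcat tinit_trcons trcons_last.
  by split=> //; split=> //; exists i.
- move=> x y y'; rewrite /G /coding_graph !tleft_tcat !tright_tcat.
  move=> -[_ [init_y [i [fi last_y]]]] [_ [init_y' [i' [fi' last_y']]]].
  rewrite -(trcons_tinit y) -(trcons_tinit y') init_y init_y' last_y last_y'.
  by rewrite (first_index_unique fi fi').
- move=> x x' y; rewrite /G /coding_graph !tleft_tcat !tright_tcat.
  move=> -[_ [init_x [i [[ri _] last_i]]]] [_ [init_x' [i' [[ri' _] last_i']]]].
  have ii' : i = i' by apply: inj_c; rewrite -last_i -last_i'.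
  by apply: tuple_split_eq; [rewrite -init_x -init_x' | rewrite ri ri' ii'].
- by [].
Qed.

End Internality.

Theorem proposition2p3 (M : Type) (S : defstr M) (Z R : M -> Prop)
  (hZdef : definable S (fun x : 'I_1 -> M => Z (x ord0)))
  (hRdef : definable S (fun x : 'I_1 -> M => R (x ord0)))
  (hZinf : infinite_set Z)
  (hZse : stably_embedded S Z) (hRse : stably_embedded S R)
  (horth : fully_orthogonal S Z R)
  (m n : nat) (X : ('I_(m + n) -> M) -> Prop)
  (hXdef : definable S X) (hXsub : forall x, X x -> in_ZR Z R x)
  (hXne : exists x, X x) :
  (Z_internal S Z X <-> finite_proj_R X) /\
  (finite_proj_R X <->
     exists (Y : ('I_(m.+1) -> M) -> Prop) (G : ('I_((m + n) + m.+1) -> M) -> Prop),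
       definable S Y /\ (forall y, Y y -> in_pow Z y) /\
       definable S G /\ fun_graph X Y G /\ graph_injective G /\
       graph_surjective Y G).
Proof.
have [x0 Xx0] := hXne.
have embed_of_finite := Z_embedding_of_finite_proj hZinf hXdef hXsub.
have finite_of_embed := finite_proj_of_Z_embedding horth hXsub.
have finite_of_internal := finite_proj_of_Z_internal horth hXsub.
have internal_of_embed := Z_internal_of_Z_embedding hZdef Xx0.
split; split.
- exact: finite_of_internal.
- by move/embed_of_finite/internal_of_embed.
- exact: embed_of_finite.
- exact: finite_of_embed.
Qed.
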